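(* With notation as in the context, fix distinct $i,j\in\{1,\dots,2r\}$ and let $\rho\in A_1^{[1]}$. Let $u_k=c_k^{\rho}$ ($1\le k\le 8$) be the vertices of the image cycle $C_{ij}^\rho$, and define $a_1,\dots,a_8\in S$ by $u_{k+1}=a_ku_k$ for $1\le k\le 7$ and $u_1=a_8u_8$ (so $a_1=g_i$, $a_8=g_j$). If $z^{\rho}\neq z$, then each element of $S$ that occurs in $(a_1,\dots,a_8)$ occurs exactly twice, the elements $a_1,a_2,a_3,a_4$ are pairwise distinct, and the elements $a_5,a_6,a_7,a_8$ are pairwise distinct.
   Context: Let $r\ge1$ and $G$ an extraspecial $2$-group of order $2^{2r+1}$ (i.e. $|Z(G)|=2$, $G/Z(G)\cong\mathbb{Z}_2^{2r}$), $Z=Z(G)=\langle z\rangle$ identified with $\mathbb{F}_2$, $G/Z$ with quadratic form $Q(Zx)=x^2$ and bilinear form $B(Zx,Zy)=[x,y]$. Assume $\{Zg_1,\dots,Zg_{2r}\}$ is a symmetric basis of $G/Z$ ($Q(Zg_i)=0$, $B(Zg_i,Zg_j)=1$ for $i\ne j$), so $g_i^2=1$ and $g_ig_j=g_jg_iz$ for $i\ne j$. $S=\{g_1,\dots,g_{2r}\}$, $\Gamma=\mathrm{Cay}(G,S)$ (vertex set $G$, edges $\{x,sx\}$), $A=\mathrm{Aut}(\Gamma)$, $N(v)$ the set of neighbours of $v$ (so $N(1)=S$), and $A_v^{[1]}$ the subgroup of $A$ fixing $v$ and every vertex of $N(v)$. For distinct $i,j$, $C_{ij}$ is the $8$-cycle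 with vertices $c_1=1$ and $c_k=s_{k-1}s_{k-2}\cdots s_1$ ($2\le k\le 8$), where $s_k=g_i$ for $k$ odd and $s_k=g_j$ for $k$ even; explicitly $c_1,\dots,c_8=1,\,g_i,\,g_jg_i,\,g_jz,\,z,\,g_iz,\,g_jg_iz,\,g_j$. *)

From mathcomp Require Import all_boot all_fingroup all_solvable.
Set Implicit Arguments. Unset Strict Implicit. Unset Printing Implicit Defensive.
Import GroupScope.
Local Open Scope group_scope.

Section Cayley.
Variable gT : finGroupType.

(* Adjacency in Cay(G,S): edges {x, s x} with s in S, i.e. y x^-1 \in S. *)
Definition cay_adj (S : {set gT}) (x y : gT) : bool := y * x^-1 \in S.

(* rho (a permutation of gT supported on the vertex set G) is an automorphism
   of Cay(G,S). *)
Definition cay_aut (G S : {set gT}) (rho : {perm gT}) : bool :=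
  perm_on G rho &&
  [forall x in G, forall y in G, cay_adj S (rho x) (rho y) == cay_adj S x y].

(* rho fixes the vertex 1 and every neighbour of 1 (N(1) = S):
   rho lies in A_1^{[1]}. *)
Definition fixes_1_and_nbrs (S : {set gT}) (rho : {perm gT}) : bool :=
  (rho 1 == 1) && [forall s in S, rho s == s].

Definition cyc_gen (gi gj : gT) (k : nat) : gT := if odd k then gi else gj.

(* c_1 = 1, c_k = s_{k-1} s_{k-2} ... s_1 for k >= 2 (c_0 is a dummy = 1). *)
Fixpoint cyc_vert (gi gj : gT) (k : nat) : gT :=
  match k with
  | 0 => 1
  | m.+1 => if m is 0%N then 1 else cyc_gen gi gj m * cyc_vert gi gj m
  end.

Definition cyc_labels (gi gj : gT) (rho : {perm gT}) : seq gT :=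
  [seq rho (cyc_vert gi gj (if k == 8 then 1 else k.+1)%N) *
       (rho (cyc_vert gi gj k))^-1 | k <- iota 1 8%N].

End Cayley.

From mathcomp Require Import all_boot all_fingroup all_solvable.
Import GroupScope.
Local Open Scope group_scope.
Set Implicit Arguments. Unset Strict Implicit. Unset Printing Implicit Defensive.

(* Let w = z^rho. Adjacency to the fixed neighbours of 1 shows that, like z, w is
   not a product of two generators, and w <> z; the labels a_k lie in S, consecutive
   labels inside each half of the cycle differ (the cycle never backtracks), and
   a_4 a_3 a_2 a_1 = w = (a_8 a_7 a_6 a_5)^-1.  In a word of four anticommuting
   involutions with distinct neighbouring letters, a repeated letter collapses the
   product into S^2 or S^2 z, so each half is injective.  Finally, moving a generator
   s across a_1 ... a_8 = 1 produces one factor z per letter other than s; as z has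
   order 2 their number is even, so s occurs an even number of times, i.e. twice. *)

Section AnticommutingInvolutions.
Variables (gT : finGroupType) (S : {set gT}) (z : gT).
Hypothesis S_invol : {in S, forall s, s * s = 1}.
Hypothesis S_anticomm : {in S &, forall s t, s != t -> s * t = t * s * z}.
Hypothesis S_commute_z : {in S, forall s, commute s z}.
Hypothesis order_z : #[z] = 2.

Lemma invS s : s \in S -> s^-1 = s.
Proof. by move=> sS; apply/eqP; rewrite eq_invg_mul S_invol. Qed.

Lemma z_neq1 : z != 1.
Proof. by rewrite -order_eq1 order_z. Qed.

Lemma mulzz : z * z = 1.
Proof. by rewrite -expg2 -order_z expg_order. Qed.

Lemma mulSSS s t : s \in S -> t \in S -> s != t -> s * t * s = t * z.
Proof.
move=> sS tS st.
rewrite (S_anticomm sS tS st) -(mulgA (t * s)) -S_commute_z // mulgA.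
by rewrite -(mulgA t) S_invol // mulg1.
Qed.

Lemma mulSS_eq1 s t : s \in S -> t \in S -> (s * t == 1) = (s == t).
Proof. by move=> sS tS; rewrite -{1}(invS tS) -eq_mulgV1. Qed.

Lemma commgSS s t : s \in S -> t \in S -> s != t -> [~ s, t] = z.
Proof.
move=> sS tS st; rewrite /commg /conjg !invS // !mulgA (mulSSS sS tS st).
by rewrite -mulgA -S_commute_z // mulgA S_invol ?mul1g.
Qed.

Lemma label_neq p q r : q * p^-1 \in S -> r != p -> q * p^-1 != r * q^-1.
Proof.
move=> qpS; apply: contraNneq => /esym E; rewrite eq_mulgV1.
by rewrite -(S_invol qpS) -{1}E mulgA mulgKV.
Qed.

Lemma z_notin_mulSS : z \notin S * S.
Proof.
apply/mulsgP => -[s t sS tS zE].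
have [est|st] := eqVneq s t; first by move: z_neq1; rewrite zE est S_invol ?eqxx.
move: (S_anticomm sS tS st); rewrite -zE -{1}(mul1g z) => /mulIg/eqP.
by rewrite eq_sym mulSS_eq1 // eq_sym (negPf st).
Qed.

Lemma invz : z^-1 = z.
Proof. by apply/eqP; rewrite eq_invg_mul mulzz. Qed.

Lemma mem_mulSSz s t : s \in S -> t \in S -> s * t * z \in S * S :* z.
Proof. by move=> sS tS; rewrite mem_rcoset mulgK mem_mulg. Qed.

Lemma notin_mulSSz w : w != z -> w \notin S * S -> w \notin S * S :* z.
Proof.
move=> wz wSS; rewrite mem_rcoset invz; apply/mulsgP => -[s t sS tS E].
have wE : w = s * t * z by rewrite -E -mulgA mulzz mulg1.
have [est|st] := eqVneq s t; first by move: wz; rewrite wE est S_invol ?mul1g ?eqxx.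
by case/negP: wSS; rewrite wE (S_anticomm sS tS st) -mulgA mulzz mulg1 mem_mulg.
Qed.

Lemma uniq_mulS4 a1 a2 a3 a4 :
  a1 \in S -> a2 \in S -> a3 \in S -> a4 \in S ->
  a1 != a2 -> a2 != a3 -> a3 != a4 ->
  a1 * a2 * a3 * a4 \notin S * S -> a1 * a2 * a3 * a4 \notin S * S :* z ->
  uniq [:: a1; a2; a3; a4].
Proof.
move=> s1 s2 s3 s4 n12 n23 n34 wSS wSSz.
have [e13|n13] := eqVneq a1 a3.
  case/negP: wSSz; rewrite -e13 (mulSSS s1 s2 n12) -mulgA -S_commute_z // mulgA.
  exact: mem_mulSSz.
have [e24|n24] := eqVneq a2 a4.
  case/negP: wSSz; rewrite -e24 -!mulgA (mulgA a2) (mulSSS s2 s3 n23) mulgA.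
  by rewrite mulgA mem_mulSSz.
have [e14|n14] := eqVneq a1 a4.
  have n31 : a3 != a1 by rewrite eq_sym.
  case/negP: wSS; rewrite -e14 -mulgA (S_anticomm s3 s1 n31) !mulgA.
  rewrite (mulSSS s1 s2 n12) -(mulgA a2) -S_commute_z // mulgA -mulgA mulzz.
  by rewrite mulg1 mem_mulg.
by rewrite /= !inE !negb_or n12 n13 n14 n23 n24 n34.
Qed.

Lemma prod_commute_z w : all (mem S) w -> commute (\prod_(t <- w) t) z.
Proof.
move=> wS; apply: commute_sym; rewrite big_seq.
apply: big_ind => [|x y|t tw]; [exact: commute1 | exact: commuteM |].
exact/commute_sym/S_commute_z/(allP wS).
Qed.

Lemma mulS_prod s w : s \in S -> all (mem S) w ->
  s * \prod_(t <- w) t = \prod_(t <- w) t * s * z ^+ count (predC1 s) w.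
Proof.
move=> sS; elim: w => [|t w IHw] /=.
  by rewrite big_nil mulg1 mul1g expg0 mulg1.
case/andP=> tS wS; rewrite big_cons.
have [->|ts] := eqVneq t s; first by rewrite add0n -!mulgA IHw // !mulgA.
rewrite add1n expgSr mulgA (S_anticomm sS tS) 1?eq_sym // -mulgA.
by rewrite -prod_commute_z // mulgA -(mulgA t) IHw // !mulgA.
Qed.

Lemma prod_eq1_count_even s w : s \in S -> all (mem S) w ->
  \prod_(t <- w) t = 1 -> ~~ odd (count (predC1 s) w).
Proof.
move=> sS wS w1; have := mulS_prod sS wS; rewrite w1 mulg1 mul1g.
by rewrite -{1}(mulg1 s) => /mulgI/esym/eqP; rewrite -order_dvdn order_z dvdn2.
Qed.

Lemma count_mem_cat_uniq (a b : seq gT) s :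
  all (mem S) (a ++ b) -> ~~ odd (size (a ++ b)) -> \prod_(t <- a ++ b) t = 1 ->
  uniq a -> uniq b -> s \in a ++ b -> count_mem s (a ++ b) = 2.
Proof.
move=> abS ab_even ab1 a_uniq b_uniq s_ab.
have even_rest : ~~ odd (count (predC (pred1 s)) (a ++ b)).
  exact: prod_eq1_count_even (allP abS s s_ab) abS ab1.
move: ab_even s_ab; rewrite -(count_predC (pred1 s)) oddD (negPf even_rest).
by rewrite mem_cat count_cat !count_uniq_mem //; case: (s \in a); case: (s \in b).
Qed.

Lemma invS_prod4 a1 a2 a3 a4 : a1 \in S -> a2 \in S -> a3 \in S -> a4 \in S ->
  (a4 * a3 * a2 * a1)^-1 = a1 * a2 * a3 * a4.
Proof. by move=> s1 s2 s3 s4; rewrite !invMg !invS // !mulgA. Qed.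

Lemma closed_walk8_labels a1 a2 a3 a4 a5 a6 a7 a8 w :
  all (mem S) [:: a1; a2; a3; a4; a5; a6; a7; a8] ->
  a1 != a2 -> a2 != a3 -> a3 != a4 -> a5 != a6 -> a6 != a7 -> a7 != a8 ->
  a4 * a3 * a2 * a1 = w -> a8 * a7 * a6 * a5 = w^-1 ->
  w != z -> w \notin S * S ->
  let a := [:: a1; a2; a3; a4; a5; a6; a7; a8] in
  [/\ forall s, s \in a -> count_mem s a = 2, uniq (take 4 a) & uniq (drop 4 a)].
Proof.
move=> aS n12 n23 n34 n56 n67 n78 w1 w2 wz wSS a.
move: (aS) => /and4P[s1 s2 s3 /and4P[s4 s5 s6 /and3P[s7 s8 _]]].
have wSSz := notin_mulSSz wz wSS.
have u1 : uniq (take 4 a).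
  rewrite -rev_uniq; apply: uniq_mulS4; rewrite 1?eq_sym ?w1 //.
have w2' : a5 * a6 * a7 * a8 = w by rewrite -invS_prod4 // w2 invgK.
have u2 : uniq (drop 4 a) by apply: uniq_mulS4; rewrite ?w2'.
split=> // s; apply: (count_mem_cat_uniq (a := take 4 a)) => //.
have -> : \prod_(t <- a) t = (a1 * a2 * a3 * a4) * (a5 * a6 * a7 * a8).
  by rewrite !big_cons big_nil !mulgA mulg1.
by rewrite -(invS_prod4 s1 s2 s3 s4) w1 w2' mulVg.
Qed.

End AnticommutingInvolutions.

Section CayleyAutomorphism.
Variables (gT : finGroupType) (G : {group gT}) (S : {set gT}) (rho : {perm gT}).
Hypothesis sSG : S \subset G.
Hypothesis rho_aut : cay_aut G S rho.
Hypothesis rho_fix : fixes_1_and_nbrs S rho.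

Lemma cay_adj_memG p q : cay_adj S p q -> (q \in G) = (p \in G).
Proof. by move=> /(subsetP sSG) qpG; rewrite -(mulgKV p q) groupMl. Qed.

(* rho is the identity off G, and no edge leaves G. *)
Lemma cay_aut_adj p q : cay_adj S (rho p) (rho q) = cay_adj S p q.
Proof.
case/andP: rho_aut => rhoG /forall_inP adjG.
have [pG|pNG] := boolP (p \in G); have [qG|qNG] := boolP (q \in G).
- by apply/eqP; move/forall_inP: (adjG p pG) => /(_ q qG).
- rewrite (out_perm rhoG qNG).
  by apply/idP/idP => /cay_adj_memG; rewrite ?(perm_closed _ rhoG) pG (negPf qNG).
- rewrite (out_perm rhoG pNG).
  by apply/idP/idP => /cay_adj_memG; rewrite ?(perm_closed _ rhoG) qG (negPf pNG).
- by rewrite !(out_perm rhoG).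
Qed.

Lemma fix_nbrs s : s \in S -> rho s = s.
Proof. by case/andP: rho_fix => _ /forall_inP/(_ s)/[apply]/eqP. Qed.

Lemma cay_aut_label p q s : q = s * p -> s \in S -> rho q * (rho p)^-1 \in S.
Proof. by move=> -> sS; have := cay_aut_adj p (s * p); rewrite /cay_adj mulgK => ->. Qed.

Lemma cay_aut_notin_mulSS p : p \notin S * S -> rho p \notin S * S.
Proof.
apply: contra => /mulsgP[s t sS tS pE].
have := cay_aut_adj t p; rewrite /cay_adj (fix_nbrs tS) pE mulgK sS => /esym ptS.
by rewrite -(mulgKV t p) mem_mulg.
Qed.

Hypothesis S_invol : {in S, forall s, s * s = 1}.

Lemma cay_aut_label_neq p q r s t : q = t * p -> r = s * q ->
  s \in S -> t \in S -> s != t -> rho q * (rho p)^-1 != rho r * (rho q)^-1.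
Proof.
move=> qE rE sS tS st; apply: (label_neq S_invol); first exact: cay_aut_label qE tS.
rewrite (inj_eq perm_inj) rE qE mulgA -{2}(mul1g p) (inj_eq (mulIg p)).
by rewrite (mulSS_eq1 S_invol).
Qed.

End CayleyAutomorphism.

Section ImageOfCycle.
Variables (gT : finGroupType) (G : {group gT}) (S : {set gT}) (z : gT).
Variable rho : {perm gT}.
Hypothesis S_invol : {in S, forall s, s * s = 1}.
Hypothesis S_anticomm : {in S &, forall s t, s != t -> s * t = t * s * z}.
Hypothesis S_commute_z : {in S, forall s, commute s z}.
Hypothesis order_z : #[z] = 2.
Hypothesis sSG : S \subset G.
Hypothesis rho_aut : cay_aut G S rho.
Hypothesis rho_fix : fixes_1_and_nbrs S rho.
Variables x y : gT.
Hypotheses (xS : x \in S) (yS : y \in S) (xy : x != y).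

Lemma cyc_vert_half c : y * (x * (y * (x * c))) = z * c.
Proof.
have yx : y != x by rewrite eq_sym.
rewrite -(commgSS S_invol S_anticomm S_commute_z yS xS yx) /commg /conjg.
by rewrite !(invS S_invol) // !mulgA.
Qed.

Lemma cyc_labels_image : rho z != z ->
  let a := cyc_labels x y rho in
  [/\ forall s, s \in a -> count_mem s a = 2, uniq (take 4 a) & uniq (drop 4 a)].
Proof.
move=> rho_z; have rho1 : rho 1 = 1 by case/andP: rho_fix => /eqP.
have yx : y != x by rewrite eq_sym.
have cyc8 : 1 = y * (x * (y * (x * (y * (x * (y * (x * 1))))))).
  by rewrite !cyc_vert_half mulg1 (mulzz order_z).
have lab_in := cay_aut_label sSG rho_aut.
have lab_neq := cay_aut_label_neq sSG rho_aut S_invol.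
have telescope (u1 u2 u3 u4 u5 : gT) :
  u5 * u4^-1 * (u4 * u3^-1) * (u3 * u2^-1) * (u2 * u1^-1) = u5 * u1^-1.
  by rewrite !mulgA !mulgKV.
rewrite /cyc_labels /= /cyc_gen /=.
apply: (closed_walk8_labels S_invol S_anticomm S_commute_z order_z (w := rho z)).
- rewrite /= !andbT; repeat (apply/andP; split); try by apply: lab_in.
  exact: lab_in cyc8 yS.
all: try by apply: lab_neq.
- exact: lab_neq (erefl _) cyc8 yS xS yx.
- by rewrite telescope rho1 invg1 mulg1 cyc_vert_half mulg1.
- by rewrite telescope rho1 mul1g cyc_vert_half mulg1.
- exact: rho_z.
apply: (cay_aut_notin_mulSS sSG rho_aut rho_fix).
exact: (z_notin_mulSS S_invol S_anticomm order_z).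
Qed.

End ImageOfCycle.

Theorem lemma4p6 (gT : finGroupType) (G : {group gT}) (r : nat) (z : gT)
    (g : 'I_(r.*2) -> gT) :
  (0 < r)%N ->
  (* G is extraspecial of order 2^(2r+1), Z(G) = <z> of order 2 *)
  #|G| = (2 ^ (r.*2).+1)%N ->
  'Z(G) = <[z]> -> #[z] = 2%N ->
  2.-abelem (G / 'Z(G)) ->
  (* {Z g_1, ..., Z g_2r} is a symmetric basis of G/Z *)
  (forall k, g k \in G) ->
  <<[set coset 'Z(G) (g k) | k : 'I_(r.*2)]>> = (G / 'Z(G))%g ->
  (forall k, g k ^+ 2 = 1) ->
  (forall k l, k != l -> g k * g l = g l * g k * z) ->
  forall (i j : 'I_(r.*2)), i != j ->
  forall rho : {perm gT},
    cay_aut G [set g k | k : 'I_(r.*2)] rho ->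
    fixes_1_and_nbrs [set g k | k : 'I_(r.*2)] rho ->
    rho z != z ->
    let a := cyc_labels (g i) (g j) rho in
    [/\ (forall s, s \in [set g k | k : 'I_(r.*2)] -> s \in a ->
           count_mem s a = 2%N),
        uniq (take 4 a)
      & uniq (drop 4 a)].
Proof.
move=> _ _ ZG oz _ gG _ g2 g_anticomm i j ij rho rho_aut rho_fix rho_z a.
set S := [set g k | k : 'I_(r.*2)] in rho_aut rho_fix *.
have [_ zC] : z \in G /\ centralises z G by apply/centerP; rewrite ZG cycle_id.
have gS k : g k \in S by apply: imset_f.
have sSG : S \subset G by apply/subsetP => _ /imsetP[k _ ->].
have S_invol : {in S, forall s, s * s = 1}.
  by move=> _ /imsetP[k _ ->]; rewrite -expg2 g2.
have S_anticomm : {in S &, forall s t, s != t -> s * t = t * s * z}.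
  move=> _ _ /imsetP[k _ ->] /imsetP[l _ ->] gkl.
  by apply: g_anticomm; apply: contraNneq gkl => ->.
have S_commute_z : {in S, forall s, commute s z}.
  by move=> s /(subsetP sSG)/zC.
have gij : g i != g j.
  apply/eqP => gij; move: (g_anticomm i j ij); rewrite gij -{1}(mulg1 (g j * g j)).
  by move=> /mulgI/esym/eqP; rewrite (negPf (z_neq1 oz)).
have [count2 ? ?] := cyc_labels_image S_invol S_anticomm S_commute_z oz sSG rho_aut
  rho_fix (gS i) (gS j) gij rho_z.
by split=> // s _; apply: count2.
Qed.
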